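(* Let $g=(g_1,\dots,g_\ell):\mathbb{R}^r\to\mathbb{R}^\ell$ and $m=(m_1,\dots,m_\ell):\mathcal{A}\to\mathbb{R}^\ell$ ($\mathcal A\subset\mathbb{R}^s$) be given, let $\{P_1(\cdot|\theta):\theta\in\Theta\}$, $\Theta\subset\mathbb{R}^d$, be a parametric family of probability measures on $\mathbb{R}^r$, and for $\alpha\in\mathcal A$ let $\mathcal{M}_\alpha=\{Q$ finite signed measure$:\int dQ=1,\ \int g\,dQ=m(\alpha)\}$ and $\mathcal M=\bigcup_{\alpha\in\mathcal A}\mathcal M_\alpha$. Let $P_T=P(\cdot|\phi^* )=\lambda^*P_1(\cdot|\theta^* )+(1-\lambda^* )P_0^*$ with $\phi^*=(\lambda^*,\theta^*,\alpha^* )$, $\lambda^*\in(0,1)$, so that $P_0^*=\frac{1}{1-\lambda^*}P_T-\frac{\lambda^*}{1-\lambda^*}P_1(\cdot|\theta^* )$. Let $$\mathcal N=\Big\{Q \text{ probability measure}:\ Q=\tfrac{1}{1-\lambda}P_T-\tfrac{\lambda}{1-\lambda}P_1(\cdot|\theta),\ \lambda\in(0,1),\ \theta\in\Theta\Big\}.$$ Assume that $P_0^*\in\mathcal M$ and that: (1) the system of equations $\int g_i(x)\big(dP(x|\phi^* )-\lambda\,dP_1(x|\theta)\big)=(1-\lambda)m_i(\alpha)$, $i=1,\dots,\ell$, has a unique solution $(\lambda^*,\theta^*,\alpha^* )$; (2) the function $\alpha\mapsto m(\alpha)$ is one-to-one; (3) for every $\theta\in\Theta$, $\lim_{\|x\|\to\infty}\frac{dP_1(x|\theta)}{dP_T(x)}=c$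 for some $c\in[0,\infty)\setminus\{1\}$; (4) the parametric component is identifiable: if $P_1(\cdot|\theta)=P_1(\cdot|\theta')$ $dP_T$-a.e., then $\theta=\theta'$. Then $\mathcal N\cap\mathcal M$ contains a unique measure, namely $P_0^*$, and there exists a unique vector $(\lambda^*,\theta^*,\alpha^* )$ such that $P_T=\lambda^*P_1(\cdot|\theta^* )+(1-\lambda^* )P_0^*$ with $P_0^*=\frac{1}{1-\lambda^*}P_T-\frac{\lambda^*}{1-\lambda^*}P_1(\cdot|\theta^* )\in\mathcal M_{\alpha^*}$.
   Context: $\frac{dP_1(\cdot|\theta)}{dP_T}$ denotes the Radon–Nikodym derivative. $P_T$ is the true distribution generating the data. *)

From HB Require Import structures.
From mathcomp Require Import all_boot all_order all_algebra.
From mathcomp Require Import all_classical all_reals all_analysis.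
Set Implicit Arguments. Unset Strict Implicit. Unset Printing Implicit Defensive.
Import Order.TTheory GRing.Theory Num.Theory.
Import numFieldNormedType.Exports.
Local Open Scope classical_set_scope.
Local Open Scope ring_scope.
Local Open Scope ereal_scope.

(* Euclidean norm on R^r, represented as r.-tuple R (which carries the
   product = Borel sigma-algebra of the library). *)
Definition tnorm (R : realType) (r : nat) (x : r.-tuple R) : R :=
  Num.sqrt (\sum_(i < r) (tnth x i) ^+ 2)%R.

Section defs.
Context d (T : measurableType d) (R : realType).

(* Q is in M_alpha: Q is a finite signed measure (difference of two finite
   measures on measurable sets), total mass 1, and  \int g_i dQ = m_i(alpha)
   where the integral of g_i w.r.t. Q = mu - nu is \int g_i dmu - \int g_i dnu
   (g_i integrable w.r.t. mu and nu). *)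
Definition in_Malpha (l s : nat) (g : 'I_l -> T -> R)
    (m : 'rV[R]_s -> 'I_l -> R) (alpha : 'rV[R]_s) (Q : set T -> \bar R) : Prop :=
  exists mu nu : {finite_measure set T -> \bar R},
    (forall A, measurable A -> Q A = mu A - nu A) /\
    (forall i, mu.-integrable setT (fun x => (g i x)%:E) /\
               nu.-integrable setT (fun x => (g i x)%:E)) /\
    Q setT = 1 /\
    (forall i, \int[mu]_x (g i x)%:E - \int[nu]_x (g i x)%:E = (m alpha i)%:E).

Definition in_M (l s : nat) (Aset : set 'rV[R]_s) (g : 'I_l -> T -> R)
    (m : 'rV[R]_s -> 'I_l -> R) (Q : set T -> \bar R) : Prop :=
  exists alpha, Aset alpha /\ in_Malpha g m alpha Q.

Definition comp0 (PT P1 : set T -> \bar R) (lam : R) : set T -> \bar R :=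
  fun A => ((1 - lam)^-1)%:E * PT A - (lam / (1 - lam))%:E * P1 A.

Definition in_N (dd : nat) (Theta : set 'rV[R]_dd) (PT : probability T R)
    (P1 : 'rV[R]_dd -> probability T R) (Q : probability T R) : Prop :=
  exists (lam : R) (theta : 'rV[R]_dd), (0 < lam < 1)%R /\ Theta theta /\
    forall A, measurable A -> Q A = comp0 PT (P1 theta) lam A.

Definition is_RN_density (mu nu : set T -> \bar R) (f : T -> R) : Prop :=
  measurable_fun setT f /\ (forall x, (0 <= f x)%R) /\
  forall A, measurable A -> nu A = \int[mu]_(x in A) (f x)%:E.

Definition moment_eq (l s : nat) (g : 'I_l -> T -> R)
    (m : 'rV[R]_s -> 'I_l -> R) (PT P1 : probability T R) (lam : R)
    (alpha : 'rV[R]_s) (i : 'I_l) : Prop :=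
  \int[PT]_x (g i x)%:E - lam%:E * \int[P1]_x (g i x)%:E
    = ((1 - lam) * m alpha i)%:E.

End defs.

From HB Require Import structures.
From mathcomp Require Import all_boot all_order all_algebra.
From mathcomp Require Import all_classical all_reals all_analysis.
From mathcomp Require Import ring lra measurable_realfun.
Set Implicit Arguments.
Unset Strict Implicit.
Unset Printing Implicit Defensive.
Import Order.TTheory GRing.Theory Num.Theory.
Import numFieldNormedType.Exports.
Local Open Scope classical_set_scope.
Local Open Scope ring_scope.
Local Open Scope ereal_scope.

(* If Q = comp0 PT P1(theta) lam is written as mu - nu with finite measures,
   clearing the denominator 1 - lam gives the identity of positive measures
   (1 - lam) mu + lam P1(theta) = (1 - lam) nu + PT.  Integrating g against it
   shows that the moment conditions defining M_alpha for Q are exactly the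
   equations (1) at (lam, theta, alpha), provided g is PT-integrable, which the
   equations at the true parameter already guarantee.  So every member of
   N /\ M yields a solution of (1), which by uniqueness is the true parameter,
   and the mixture identity turns the corresponding comp0 back into P0. *)

Lemma fin_num_integrable d (T : measurableType d) (R : realType)
    (mu : {measure set T -> \bar R}) (D : set T) (f : T -> \bar R) :
  measurable D -> measurable_fun D f -> \int[mu]_(x in D) f x \is a fin_num ->
  mu.-integrable D f.
Proof.
move=> mD mf; rewrite integralE fin_numB => /andP[fp fn].
apply/integrableP; split => //.
rewrite (_ : (fun x => `|f x|) = f^\+ \+ f^\-); last exact: fune_abse.
rewrite ge0_integralD//; [|exact: measurable_funepos|exact: measurable_funeneg].
by rewrite -(fineK fp) -(fineK fn) -EFinD ltry.
Qed.

Section mscale_integral.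
Context d (T : measurableType d) (R : realType).
Context {m : {measure set T -> \bar R}} {k : {nonneg R}} {f : T -> \bar R}.

Lemma integrable_mscale : (0 < k%:num)%R ->
  (mscale k m).-integrable setT f <-> m.-integrable setT f.
Proof.
move=> k0; split => /integrableP[mf fi]; apply/integrableP; split => //;
  move: fi; (rewrite ge0_integral_mscale//; last exact: measurableT_comp).
- apply: contraTT; rewrite -leNgt leye_eq => /eqP ->.
  by rewrite gt0_muley ?lte_fin.
- exact: lte_mul_pinfty.
Qed.

Lemma integral_mscale : m.-integrable setT f ->
  \int[mscale k m]_x f x = k%:num%:E * \int[m]_x f x.
Proof.
move=> fi; have mf := measurable_int _ fi.
rewrite !(integralE _ _ f) !ge0_integral_mscale//;
  [|exact: measurable_funeneg|exact: measurable_funepos].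
by rewrite [RHS]muleBr// fin_num_adde_defl// fin_numN integrable_neg_fin_num.
Qed.

End mscale_integral.

Section measure_balance.
Context d (T : measurableType d) (R : realType).
Variables m1 m2 m3 m4 : {measure set T -> \bar R}.
Hypothesis balance : forall A, measurable A -> m1 A + m2 A = m3 A + m4 A.

Let measure_add_eq A : measurable A -> A `<=` setT ->
  measure_add m1 m2 A = measure_add m3 m4 A.
Proof. by move=> mA _; rewrite !measure_addE balance. Qed.

Lemma ge0_integral_measure_balance (f : T -> \bar R) :
  (forall x, 0 <= f x) -> measurable_fun setT f ->
  \int[m1]_x f x + \int[m2]_x f x = \int[m3]_x f x + \int[m4]_x f x.
Proof.
move=> f0 mf; rewrite -!ge0_integral_measure_add//.
exact: eq_measure_integral.
Qed.

Lemma integrable_measure_balance (f : T -> \bar R) :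
  m1.-integrable setT f -> m3.-integrable setT f -> m4.-integrable setT f ->
  m2.-integrable setT f.
Proof.
move=> /integrableP[mf _] /integrableP[_ f3] /integrableP[_ f4].
apply/integrableP; split => //.
apply: (@le_lt_trans _ _ (\int[m1]_x `|f x| + \int[m2]_x `|f x|)).
  by rewrite leeDr// integral_ge0.
rewrite ge0_integral_measure_balance//; last exact: measurableT_comp.
exact: lte_add_pinfty.
Qed.

Lemma integral_measure_balance (f : T -> \bar R) :
  m1.-integrable setT f -> m3.-integrable setT f -> m4.-integrable setT f ->
  \int[m1]_x f x + \int[m2]_x f x = \int[m3]_x f x + \int[m4]_x f x.
Proof.
move=> f1 f3 f4; have f2 := integrable_measure_balance f1 f3 f4.
rewrite -!integral_measure_add//.
exact: eq_measure_integral.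
Qed.

End measure_balance.

Section comp0_integral.
Context d (T : measurableType d) (R : realType).
Variables (PT P1 : probability T R) (mu nu : {finite_measure set T -> \bar R}).
Variable lam : R.
Hypothesis lam01 : (0 < lam < 1)%R.
Hypothesis comp0E : forall A, measurable A -> comp0 PT P1 lam A = mu A - nu A.

Let lam_gt0 : (0 < lam)%R. Proof. by case/andP: lam01. Qed.
Let lamC_gt0 : (0 < 1 - lam)%R.
Proof. by case/andP: lam01; rewrite subr_gt0. Qed.
Let w := NngNum (ltW lam_gt0).
Let wC := NngNum (ltW lamC_gt0).

Let comp0_balance A : measurable A ->
  mscale wC mu A + mscale w P1 A = mscale wC nu A + PT A.
Proof.
move=> mA; have := comp0E mA; rewrite /comp0 /mscale /=.
rewrite -[PT A]fineK ?fin_num_measure// -[P1 A]fineK ?fin_num_measure//.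
rewrite -[mu A]fineK ?fin_num_measure// -[nu A]fineK ?fin_num_measure//.
set t := fine (PT A); set p := fine (P1 A).
set a := fine (mu A); set b := fine (nu A).
rewrite -!EFinM -!EFinB -!EFinD => /eqP; rewrite eqe => /eqP ab.
congr (_%:E); have lamC0 : (1 - lam != 0)%R by rewrite gt_eqF.
have -> : a = ((1 - lam)^-1 * t - lam / (1 - lam) * p + b)%R by lra.
by field.
Qed.

Lemma integral_comp0 (f : T -> \bar R) :
  mu.-integrable setT f -> nu.-integrable setT f -> PT.-integrable setT f ->
  \int[PT]_x f x - lam%:E * \int[P1]_x f x =
    (1 - lam)%:E * (\int[mu]_x f x - \int[nu]_x f x).
Proof.
move=> fmu fnu fPT.
have fmu' : (mscale wC mu).-integrable setT f by apply/integrable_mscale.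
have fnu' : (mscale wC nu).-integrable setT f by apply/integrable_mscale.
have fP1 : P1.-integrable setT f.
  apply/(integrable_mscale (k:=w) lam_gt0).
  by apply: (integrable_measure_balance comp0_balance).
have := integral_measure_balance comp0_balance fmu' fnu' fPT.
rewrite !integral_mscale//=.
rewrite -[\int[mu]_x f x]fineK; last exact: integrable_fin_num.
rewrite -[\int[nu]_x f x]fineK; last exact: integrable_fin_num.
rewrite -[\int[PT]_x f x]fineK; last exact: integrable_fin_num.
rewrite -[\int[P1]_x f x]fineK; last exact: integrable_fin_num.
rewrite -!EFinM -!EFinB -!EFinD => /eqP; rewrite eqe => /eqP balanceE.
congr (_%:E); lra.
Qed.

End comp0_integral.

Lemma comp0_mixture d (T : measurableType d) (R : realType)
    (P P1 P0 : set T -> \bar R) (lam : R) (A : set T) :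
  (lam != 1)%R -> P1 A \is a fin_num -> P0 A \is a fin_num ->
  P A = lam%:E * P1 A + (1 - lam)%:E * P0 A -> comp0 P P1 lam A = P0 A.
Proof.
move=> lam1 P1A P0A PA; rewrite /comp0 PA -(fineK P1A) -(fineK P0A).
rewrite -!EFinM -!EFinD; congr (_%:E).
by field; rewrite subr_eq0 eq_sym.
Qed.

Section moment_equations.
Context d (T : measurableType d) (R : realType) (l s : nat).
Variables (g : 'I_l -> T -> R) (m : 'rV[R]_s -> 'I_l -> R).

Lemma in_Malpha_ext alpha (Q Q' : set T -> \bar R) :
  (forall A, measurable A -> Q A = Q' A) ->
  in_Malpha g m alpha Q -> in_Malpha g m alpha Q'.
Proof.
move=> QQ' [mu [nu [QE [gint [Q1 gm]]]]]; exists mu, nu.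
by split; [move=> A mA; rewrite -QQ' ?QE|rewrite -QQ'].
Qed.

Lemma moment_eq_integrable (PT P1 : probability T R) lam alpha i :
  measurable_fun setT (fun x => (g i x)%:E) ->
  moment_eq g m PT P1 lam alpha i -> PT.-integrable setT (fun x => (g i x)%:E).
Proof.
move=> mg gi; apply: fin_num_integrable => //.
suff : \int[PT]_x (g i x)%:E - lam%:E * \int[P1]_x (g i x)%:E \is a fin_num.
  by rewrite fin_numB => /andP[].
by rewrite gi.
Qed.

Lemma in_Malpha_comp0_moment_eq (PT P1 : probability T R) lam alpha :
  (0 < lam < 1)%R -> (forall i, PT.-integrable setT (fun x => (g i x)%:E)) ->
  in_Malpha g m alpha (comp0 PT P1 lam) ->
  forall i, moment_eq g m PT P1 lam alpha i.
Proof.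
move=> lam01 gPT [mu [nu [comp0E [gint [_ gm]]]]] i.
have [gmu gnu] := gint i.
by rewrite /moment_eq (integral_comp0 lam01 comp0E gmu gnu (gPT i)) gm -EFinM.
Qed.

End moment_equations.

Theorem proposition2 (R : realType) (r dd s l : nat)
  (Theta : set 'rV[R]_dd) (Aset : set 'rV[R]_s)
  (g : 'I_l -> r.-tuple R -> R) (m : 'rV[R]_s -> 'I_l -> R)
  (P1 : 'rV[R]_dd -> probability (r.-tuple R) R)
  (PT P0 : probability (r.-tuple R) R)
  (lam : R) (theta : 'rV[R]_dd) (alpha : 'rV[R]_s)
  (hlam : (0 < lam < 1)%R) (htheta : Theta theta) (halpha : Aset alpha)
  (hPT : forall A, measurable A ->
     PT A = lam%:E * P1 theta A + (1 - lam)%:E * P0 A)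
  (hP0M : in_M Aset g m P0)
  (H1 : (forall i, moment_eq g m PT (P1 theta) lam alpha i) /\
        (forall (lam' : R) theta' alpha', (0 < lam' < 1)%R -> Theta theta' ->
           Aset alpha' -> (forall i, moment_eq g m PT (P1 theta') lam' alpha' i) ->
           lam' = lam /\ theta' = theta /\ alpha' = alpha))
  (H2 : forall a a', Aset a -> Aset a' -> (forall i, m a i = m a' i) -> a = a')
  (H3 : forall th, Theta th -> exists c : R, (0 <= c)%R /\ c != 1%R /\
        exists f, is_RN_density PT (P1 th) f /\
          forall e : R, (0 < e)%R -> exists M : R, forall x,
            (M < tnorm x)%R -> (`|f x - c| < e)%R)
  (H4 : forall th th', Theta th -> Theta th' -> forall f f',
        is_RN_density PT (P1 th) f -> is_RN_density PT (P1 th') f' ->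
        {ae PT, forall x, f x = f' x} -> th = th') :
  (in_N Theta PT P1 P0 /\ in_M Aset g m P0 /\
   forall Q : probability (r.-tuple R) R,
     in_N Theta PT P1 Q -> in_M Aset g m Q ->
     forall A, measurable A -> Q A = P0 A) /\
  (in_Malpha g m alpha (comp0 PT (P1 theta) lam) /\
   forall (lam' : R) theta' alpha', (0 < lam' < 1)%R -> Theta theta' -> Aset alpha' ->
     in_Malpha g m alpha' (comp0 PT (P1 theta') lam') ->
     lam' = lam /\ theta' = theta /\ alpha' = alpha).
Proof.
have [moment_star moment_unique] := H1.
have [alpha0 [alpha0A P0_Malpha0]] := hP0M.
have [mu0 [nu0 [_ [gint0 _]]]] := P0_Malpha0.
have gPT i : PT.-integrable setT (fun x => (g i x)%:E).
  exact: moment_eq_integrable (measurable_int _ (gint0 i).1) (moment_star i).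
have comp0_unique lam' theta' alpha' : (0 < lam' < 1)%R -> Theta theta' ->
    Aset alpha' -> in_Malpha g m alpha' (comp0 PT (P1 theta') lam') ->
    lam' = lam /\ theta' = theta /\ alpha' = alpha.
  move=> lam'01 theta'T alpha'A Malpha'.
  exact: moment_unique (in_Malpha_comp0_moment_eq lam'01 gPT Malpha').
have P0E A : measurable A -> P0 A = comp0 PT (P1 theta) lam A.
  move=> mA; apply/esym/comp0_mixture; rewrite ?fin_num_measure ?hPT//.
  by rewrite lt_eqF//; case/andP: hlam.
have Malpha : in_Malpha g m alpha (comp0 PT (P1 theta) lam).
  have Malpha0 := in_Malpha_ext P0E P0_Malpha0.
  by have [_ [_ <-]] := comp0_unique _ _ _ hlam htheta alpha0A Malpha0.
split; last by split.
split; first by exists lam, theta; split => //; split => // A mA; exact: P0E.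
split => // Q [lam' [theta' [lam'01 [theta'T QE]]]] [alpha' [alpha'A QM]] A mA.
rewrite QE// P0E//; have QM' := in_Malpha_ext QE QM.
by have [-> [-> _]] := comp0_unique _ _ _ lam'01 theta'T alpha'A QM'.
Qed.
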